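(* Let $\varphi$ be a metric formula built only with non-empty intervals $[m,n)$ ($m<n$), let $(\langle \mathbf{H},\mathbf{T}\rangle,\tau)$ be a strict timed HT-trace of length $\lambda>0$, let $\langle D,H,T\rangle$ be its corresponding $QHT[\preccurlyeq_\delta]$ interpretation, and let $i\in[0,\lambda)$. Then $$(\langle \mathbf{H},\mathbf{T}\rangle,\tau),i\models\varphi \iff \langle D,H,T\rangle\models[\varphi]_{\tau(i)},$$ $$(\langle \mathbf{T},\mathbf{T}\rangle,\tau),i\models\varphi \iff \langle D,T,T\rangle\models[\varphi]_{\tau(i)}.$$
   Context: Metric formulas over an alphabet $\mathcal{A}$: $\varphi ::= p \mid \bot \mid \varphi_1\otimes\varphi_2 \mid \bullet_I\varphi \mid \varphi_1\,\mathsf{S}_I\,\varphi_2 \mid \varphi_1\,\mathsf{T}_I\,\varphi_2 \mid \bigcirc_I\varphi \mid \varphi_1\,\mathsf{U}_I\,\varphi_2 \mid \varphi_1\,\mathsf{R}_I\,\varphi_2$, with $p\in\mathcal{A}$, $\otimes\in\{\to,\wedge,\vee\}$, $I=[m,n)$, $m\in\mathbb{N}$, $n\in\mathbb{N}\cup\{\omega\}$ (previous, since, trigger, next, until, release). Derived: $\neg\varphi=\varphi\to\bot$, $\top=\neg\bot$, weak previous $\widehat{\bullet}_I\varphi=\bullet_I\varphi\vee\neg\bullet_I\top$, weak next $\widehat{\bigcirc}_I\varphi=\bigcirc_I\varphi\vee\neg\bigcirc_I\top$. A timed HT-trace of length $\lambda\in\mathbb{N}\cup\{\omega\}$ is $(\langle\mathbf{H},\mathbf{T}\rangle,\tau)$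 with $\mathbf{H}=(H_i)_{i\in[0,\lambda)}$, $\mathbf{T}=(T_i)_{i\in[0,\lambda)}$, $H_i\subseteq T_i\subseteq\mathcal{A}$, and $\tau:[0,\lambda)\to\mathbb{N}$, $\tau(0)=0$, $\tau(i)\le\tau(i+1)$; it is strict if $\tau(i)<\tau(i+1)$ whenever $i+1<\lambda$. Satisfaction at $k\in[0,\lambda)$ for $\mathbf{M}=(\langle\mathbf{H},\mathbf{T}\rangle,\tau)$: $\mathbf{M},k\not\models\bot$; $\mathbf{M},k\models p$ iff $p\in H_k$; $\wedge,\vee$ as usual; $\mathbf{M},k\models\varphi\to\psi$ iff for both $\mathbf{M}'=\mathbf{M}$ and $\mathbf{M}'=(\langle\mathbf{T},\mathbf{T}\rangle,\tau)$, $\mathbf{M}',k\not\models\varphi$ or $\mathbf{M}',k\models\psi$; $\bullet_I\varphi$: $k>0$, $\mathbf{M},k-1\models\varphi$ and $\tau(k)-\tau(k-1)\in I$; $\varphi\,\mathsf{S}_I\,\psi$: for some $j\in[0,k]$ with $\tau(k)-\tau(j)\in I$, $\mathbf{M},j\models\psi$ and $\mathbf{M},i\models\varphi$ for all $i\in(j,k]$; $\varphi\,\mathsf{T}_I\,\psi$: for all $j\in[0,k]$ with $\tau(k)-\tau(j)\in I$, $\mathbf{M},j\models\psi$ or $\mathbf{M},i\models\varphi$ for some $i\in(j,k]$; $\bigcirc_I\varphi$: $k+1<\lambda$, $\mathbf{M},k+1\models\varphi$, $\tau(k+1)-\tau(k)\in I$; $\varphi\,\mathsf{U}_I\,\psi$: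 for some $j\in[k,\lambda)$ with $\tau(j)-\tau(k)\in I$, $\mathbf{M},j\models\psi$ and $\mathbf{M},i\models\varphi$ for all $i\in[k,j)$; $\varphi\,\mathsf{R}_I\,\psi$: for all $j\in[k,\lambda)$ with $\tau(j)-\tau(k)\in I$, $\mathbf{M},j\models\psi$ or $\mathbf{M},i\models\varphi$ for some $i\in[k,j)$. $QHT[\preccurlyeq_\delta]$: function-free first-order language with constant $0$, monadic predicates $p/1$ for $p\in\mathcal{A}$, and binary predicates $\preccurlyeq_\delta$, $\delta\in\mathbb{Z}\cup\{\omega\}$. An interpretation is $\langle D,H,T\rangle$ with $0\in D\subseteq\mathbb{N}$, $H\subseteq T\subseteq\{p(d)\mid p\in\mathcal{A},d\in D\}$. Satisfaction: $\langle D,H,T\rangle\models p(t)$ iff $p(t)\in H$; $\models t_1\preccurlyeq_\delta t_2$ iff $t_1-t_2\le\delta$; $\wedge,\vee$ as usual; $\models\varphi\to\psi$ iff for $X\in\{H,T\}$, $\langle D,X,T\rangle\not\models\varphi$ or $\langle D,X,T\rangle\models\psi$; $\forall x\,\varphi(x)$ iff $\varphi(t)$ holds for all $t\in D$; $\exists x\,\varphi(x)$ iff for some $t\in D$. Abbreviations: $x\prec_\delta y:=\neg(y\preccurlyeq_{-\delta}x)$, $x\le y:=x\preccurlyeq_0 y$, $x=y:=x\le y\wedge y\le x$, $x<y:=x\le y\wedge\neg(x=y)$, and $x\odot y\oplus z$ means $x\odot y\wedge y\oplus z$. Translation $[\cdot]_x$ (each quantifier introducing a fresh variable), for $I=[m,n)$: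 $[\bot]_x=\bot$; $[p]_x=p(x)$; $[\varphi\otimes\psi]_x=[\varphi]_x\otimes[\psi]_x$; $[\bigcirc_{[m,n)}\psi]_x=\exists y(x<y\wedge\neg\exists z\,(x<z<y)\wedge x\preccurlyeq_{-m}y\prec_n x\wedge[\psi]_y)$; $[\widehat{\bigcirc}_{[m,n)}\psi]_x=\forall y(x<y\wedge\neg\exists z\,(x<z<y)\wedge x\preccurlyeq_{-m}y\prec_n x\to[\psi]_y)$; $[\varphi\,\mathsf{U}_{[m,n)}\,\psi]_x=\exists y(x\le y\wedge x\preccurlyeq_{-m}y\prec_n x\wedge[\psi]_y\wedge\forall z(x\le z<y\to[\varphi]_z))$; $[\varphi\,\mathsf{R}_{[m,n)}\,\psi]_x=\forall y((x\le y\wedge x\preccurlyeq_{-m}y\prec_n x)\to([\psi]_y\vee\exists z(x\le z<y\wedge[\varphi]_z)))$; $[\bullet_{[m,n)}\psi]_x=\exists y(y<x\wedge\neg\exists z(y<z<x)\wedge x\prec_n y\preccurlyeq_{-m}x\wedge[\psi]_y)$; $[\widehat{\bullet}_{[m,n)}\psi]_x=\forall y((y<x\wedge\neg\exists z(y<z<x)\wedge x\prec_n y\preccurlyeq_{-m}x)\to[\psi]_y)$; $[\varphi\,\mathsf{S}_{[m,n)}\,\psi]_x=\exists y(y\le x\wedge x\prec_n y\preccurlyeq_{-m}x\wedge[\psi]_y\wedge\forall z(y<z\le x\to[\varphi]_z))$; $[\varphi\,\mathsf{T}_{[m,n)}\,\psi]_x=\forall y((y\le x\wedge x\prec_n y\preccurlyeq_{-m}x)\to([\psi]_y\vee\exists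 z(y<z\le x\wedge[\varphi]_z)))$. The interpretation corresponding to $(\langle\mathbf{H},\mathbf{T}\rangle,\tau)$ of length $\lambda>0$ is $\langle D,H,T\rangle$ with $D=\{\tau(i)\mid i\in[0,\lambda)\}$, $H=\{p(\tau(i))\mid i\in[0,\lambda),p\in H_i\}$, $T=\{p(\tau(i))\mid i\in[0,\lambda),p\in T_i\}$. *)

From Stdlib Require Import Arith ZArith.
Set Implicit Arguments.

(* Time intervals J = [m, n), m : nat, n : nat ∪ {ω} (None = ω).        *)
Record interval := Itv { itv_lo : nat; itv_hi : option nat }.

Definition in_itv (J : interval) (d : nat) : Prop :=
  itv_lo J <= d /\ match itv_hi J with None => True | Some n => d < n end.

Definition itv_nonempty (J : interval) : Prop :=
  match itv_hi J with None => True | Some n => itv_lo J < n end.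

(* Lengths λ ∈ ℕ ∪ {ω} (None = ω); [inlen lam j] means j ∈ [0, λ). *)
Definition inlen (lam : option nat) (j : nat) : Prop :=
  match lam with None => True | Some l => j < l end.

(* Metric formulas.  Weak previous / weak next are included as         *)
(* constructors because the translation has dedicated clauses for      *)
(* them; their semantics is that of the abbreviations                  *)
(* •̂_I φ = •_I φ ∨ ¬•_I ⊤  and  ◯̂_I φ = ◯_I φ ∨ ¬◯_I ⊤.                *)
Inductive mform (A : Type) : Type :=
| MAtom : A -> mform A
| MBot : mform A
| MImp : mform A -> mform A -> mform A
| MAnd : mform A -> mform A -> mform A
| MOr : mform A -> mform A -> mform A
| MPrev : interval -> mform A -> mform A
| MWPrev : interval -> mform A -> mform A
| MSince : interval -> mform A -> mform A -> mform A
| MTrigger : interval -> mform A -> mform A -> mform A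
| MNext : interval -> mform A -> mform A
| MWNext : interval -> mform A -> mform A
| MUntil : interval -> mform A -> mform A -> mform A
| MRelease : interval -> mform A -> mform A -> mform A.

Arguments MBot {A}.

Fixpoint nonempty_intervals {A} (f : mform A) : Prop :=
  match f with
  | MAtom _ | MBot => True
  | MImp f g | MAnd f g | MOr f g => nonempty_intervals f /\ nonempty_intervals g
  | MPrev J f | MWPrev J f | MNext J f | MWNext J f =>
      itv_nonempty J /\ nonempty_intervals f
  | MSince J f g | MTrigger J f g | MUntil J f g | MRelease J f g =>
      itv_nonempty J /\ nonempty_intervals f /\ nonempty_intervals g
  end.

(* Timed HT-traces: H T : nat -> A -> Prop (H i p  means p ∈ H_i),      *)
(* tau : nat -> nat, length lam; only positions in [0, lam) matter.    *)
Definition timed_ht_trace {A} (lam : option nat) (H T : nat -> A -> Prop)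
    (tau : nat -> nat) : Prop :=
  (forall i p, inlen lam i -> H i p -> T i p) /\
  tau 0 = 0 /\
  (forall i, inlen lam (S i) -> tau i <= tau (S i)).

Definition strict_trace {A} (lam : option nat) (H T : nat -> A -> Prop)
    (tau : nat -> nat) : Prop :=
  timed_ht_trace lam H T tau /\
  (forall i, inlen lam (S i) -> tau i < tau (S i)).

(* Satisfaction (M, k) ⊨ φ with M = (⟨X, T⟩, tau) of length lam.        *)
Fixpoint sat {A} (lam : option nat) (tau : nat -> nat) (T : nat -> A -> Prop)
    (X : nat -> A -> Prop) (k : nat) (f : mform A) {struct f} : Prop :=
  match f with
  | MAtom p => X k p
  | MBot => False
  | MAnd f g => sat lam tau T X k f /\ sat lam tau T X k g
  | MOr f g => sat lam tau T X k f \/ sat lam tau T X k g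
  | MImp f g =>
      (~ sat lam tau T X k f \/ sat lam tau T X k g) /\
      (~ sat lam tau T T k f \/ sat lam tau T T k g)
  | MPrev J f =>
      0 < k /\ sat lam tau T X (k - 1) f /\ in_itv J (tau k - tau (k - 1))
  | MWPrev J f =>
      (* •_I f ∨ ¬•_I ⊤ ; ⊤ holds everywhere *)
      (0 < k /\ sat lam tau T X (k - 1) f /\ in_itv J (tau k - tau (k - 1))) \/
      ~ (0 < k /\ in_itv J (tau k - tau (k - 1)))
  | MSince J f g =>
      exists j, j <= k /\ in_itv J (tau k - tau j) /\ sat lam tau T X j g /\
        (forall i, j < i -> i <= k -> sat lam tau T X i f)
  | MTrigger J f g =>
      forall j, j <= k -> in_itv J (tau k - tau j) ->
        sat lam tau T X j g \/ (exists i, j < i /\ i <= k /\ sat lam tau T X i f)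
  | MNext J f =>
      inlen lam (S k) /\ sat lam tau T X (S k) f /\ in_itv J (tau (S k) - tau k)
  | MWNext J f =>
      (inlen lam (S k) /\ sat lam tau T X (S k) f /\ in_itv J (tau (S k) - tau k)) \/
      ~ (inlen lam (S k) /\ in_itv J (tau (S k) - tau k))
  | MUntil J f g =>
      exists j, k <= j /\ inlen lam j /\ in_itv J (tau j - tau k) /\
        sat lam tau T X j g /\ (forall i, k <= i -> i < j -> sat lam tau T X i f)
  | MRelease J f g =>
      forall j, k <= j -> inlen lam j -> in_itv J (tau j - tau k) ->
        sat lam tau T X j g \/ (exists i, k <= i /\ i < j /\ sat lam tau T X i f)
  end.

(* Terms: variables (indexed by nat) and constants naming elements of  *)
(* ℕ (the constant 0 is TCon 0; constants d ∈ D are used for [φ]_d).   *)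
(* δ ∈ ℤ ∪ {ω} is option Z, None = ω.                                  *)
Inductive term := TVar : nat -> term | TCon : nat -> term.

Inductive fform (A : Type) : Type :=
| FAtom : A -> term -> fform A
| FLe : option Z -> term -> term -> fform A
| FBot : fform A
| FImp : fform A -> fform A -> fform A
| FAnd : fform A -> fform A -> fform A
| FOr : fform A -> fform A -> fform A
| FAll : nat -> fform A -> fform A
| FEx : nat -> fform A -> fform A.

Arguments FBot {A}.
Arguments FLe {A}.

Definition teval (e : nat -> nat) (t : term) : nat :=
  match t with TVar v => e v | TCon c => c end.

Definition upd (e : nat -> nat) (v d : nat) : nat -> nat :=
  fun w => if Nat.eqb w v then d else e w.

(* ⟨D, X, T⟩ ⊨ f under assignment e; atoms p(d) are represented by
   X p d (i.e. p(d) ∈ X). *)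
Fixpoint fsat {A} (D : nat -> Prop) (T : A -> nat -> Prop) (X : A -> nat -> Prop)
    (e : nat -> nat) (f : fform A) {struct f} : Prop :=
  match f with
  | FAtom p t => X p (teval e t)
  | FLe od t1 t2 =>
      match od with
      | None => True
      | Some d => (Z.of_nat (teval e t1) - Z.of_nat (teval e t2) <= d)%Z
      end
  | FBot => False
  | FAnd f g => fsat D T X e f /\ fsat D T X e g
  | FOr f g => fsat D T X e f \/ fsat D T X e g
  | FImp f g =>
      (~ fsat D T X e f \/ fsat D T X e g) /\
      (~ fsat D T T e f \/ fsat D T T e g)
  | FAll v f => forall d, D d -> fsat D T X (upd e v d) f
  | FEx v f => exists d, D d /\ fsat D T X (upd e v d) f
  end.

Definition fneg {A} (f : fform A) : fform A := FImp f FBot.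
Definition ftop {A} : fform A := fneg FBot.
Definition fle {A} (x y : term) : fform A := FLe (Some 0%Z) x y.
Definition feq {A} (x y : term) : fform A := FAnd (fle x y) (fle y x).
Definition flt {A} (x y : term) : fform A := FAnd (fle x y) (fneg (feq x y)).
Definition fpreceq_negm {A} (m : nat) (x y : term) : fform A :=
  FLe (Some (- Z.of_nat m)%Z) x y.
Definition fprec {A} (n : option nat) (x y : term) : fform A :=
  match n with
  | Some n => fneg (FLe (Some (- Z.of_nat n)%Z) y x)
  | None => ftop
  end.

(* Variables TVar c and TVar (c+1) are the fresh
   variables y, z introduced at this level; subformulas use variables
   >= c+2, so every quantifier binds a variable distinct from all
   variables in whose scope it occurs. *)
Fixpoint trans {A} (f : mform A) (x : term) (c : nat) {struct f} : fform A :=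
  let y := TVar c in
  let z := TVar (S c) in
  let c' := S (S c) in
  match f with
  | MBot => FBot
  | MAtom p => FAtom p x
  | MImp f g => FImp (trans f x c) (trans g x c)
  | MAnd f g => FAnd (trans f x c) (trans g x c)
  | MOr f g => FOr (trans f x c) (trans g x c)
  | MNext J g =>
      FEx c (FAnd (flt x y)
            (FAnd (fneg (FEx (S c) (FAnd (flt x z) (flt z y))))
            (FAnd (FAnd (fpreceq_negm (itv_lo J) x y) (fprec (itv_hi J) y x))
                  (trans g y c'))))
  | MWNext J g =>
      FAll c (FImp (FAnd (flt x y)
                   (FAnd (fneg (FEx (S c) (FAnd (flt x z) (flt z y))))
                         (FAnd (fpreceq_negm (itv_lo J) x y) (fprec (itv_hi J) y x))))
                   (trans g y c'))
  | MUntil J f g =>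
      FEx c (FAnd (fle x y)
            (FAnd (FAnd (fpreceq_negm (itv_lo J) x y) (fprec (itv_hi J) y x))
            (FAnd (trans g y c')
                  (FAll (S c) (FImp (FAnd (fle x z) (flt z y)) (trans f z c'))))))
  | MRelease J f g =>
      FAll c (FImp (FAnd (fle x y)
                         (FAnd (fpreceq_negm (itv_lo J) x y) (fprec (itv_hi J) y x)))
                   (FOr (trans g y c')
                        (FEx (S c) (FAnd (FAnd (fle x z) (flt z y)) (trans f z c')))))
  | MPrev J g =>
      FEx c (FAnd (flt y x)
            (FAnd (fneg (FEx (S c) (FAnd (flt y z) (flt z x))))
            (FAnd (FAnd (fprec (itv_hi J) x y) (fpreceq_negm (itv_lo J) y x))
                  (trans g y c'))))
  | MWPrev J g =>
      FAll c (FImp (FAnd (flt y x)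
                   (FAnd (fneg (FEx (S c) (FAnd (flt y z) (flt z x))))
                         (FAnd (fprec (itv_hi J) x y) (fpreceq_negm (itv_lo J) y x))))
                   (trans g y c'))
  | MSince J f g =>
      FEx c (FAnd (fle y x)
            (FAnd (FAnd (fprec (itv_hi J) x y) (fpreceq_negm (itv_lo J) y x))
            (FAnd (trans g y c')
                  (FAll (S c) (FImp (FAnd (flt y z) (fle z x)) (trans f z c'))))))
  | MTrigger J f g =>
      FAll c (FImp (FAnd (fle y x)
                         (FAnd (fprec (itv_hi J) x y) (fpreceq_negm (itv_lo J) y x)))
                   (FOr (trans g y c')
                        (FEx (S c) (FAnd (FAnd (flt y z) (fle z x)) (trans f z c')))))
  end.

Definition corrD (lam : option nat) (tau : nat -> nat) (d : nat) : Prop :=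
  exists i, inlen lam i /\ tau i = d.

Definition corrI {A} (lam : option nat) (tau : nat -> nat) (X : nat -> A -> Prop)
    (p : A) (d : nat) : Prop :=
  exists i, inlen lam i /\ tau i = d /\ X i p.

(* [φ]_x is closed when x is a constant; the assignment is irrelevant. *)
Definition env0 : nat -> nat := fun _ => 0.

From Stdlib Require Import Arith ZArith Lia Classical.

(* Strictness makes [tau] an order embedding of the positions [0, lam) onto the
   domain D, so every quantifier of the translation can be read as a quantifier
   over positions and every comparison between translated points as a comparison
   of positions; "no point strictly in between" then singles out the successor or
   predecessor position.  The claim follows by induction on the formula, for an
   arbitrary here-component X included in T, under the invariant that the term x
   denotes [tau k] and that the variables bound further in are fresh.  The guards
   of the implications produced by the translation contain no predicate atoms, so
   they mean the same in <D, X, T> and <D, T, T>; by persistence of QHT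
   satisfaction from X to T each such implication is then a classical one. *)

Lemma guarded_persistent (P Q Q' : Prop) :
  (Q -> Q') -> ((~ P \/ Q) /\ (~ P \/ Q') <-> (P -> Q)).
Proof. intros hQ; destruct (classic P); tauto. Qed.

Definition term_below (c : nat) (x : term) : Prop :=
  match x with TVar v => v < c | TCon _ => True end.

Lemma teval_upd_eq e v d : teval (upd e v d) (TVar v) = d.
Proof. unfold upd; simpl; now rewrite Nat.eqb_refl. Qed.

Lemma teval_upd_fresh e v d c x :
  term_below c x -> c <= v -> teval (upd e v d) x = teval e x.
Proof.
  destruct x as [w|w]; simpl; auto. intros hw hv. unfold upd.
  destruct (Nat.eqb_spec w v); [lia|reflexivity].
Qed.

Lemma teval_upd_outer e c d x : term_below c x -> teval (upd e c d) x = teval e x.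
Proof. intros; apply (teval_upd_fresh _ _ _ c); auto. Qed.

Lemma teval_upd_inner e c d d' x :
  term_below c x -> teval (upd (upd e c d) (S c) d') x = teval e x.
Proof. intros; rewrite !(teval_upd_fresh _ _ _ c); auto. Qed.

Lemma teval_upd_inner_var e c d d' : teval (upd (upd e c d) (S c) d') (TVar c) = d.
Proof. rewrite (teval_upd_fresh _ _ _ (S c)); [apply teval_upd_eq|simpl; lia|lia]. Qed.

Section QHT.
Variables (A : Type) (D : nat -> Prop) (TT : A -> nat -> Prop).

Lemma fsat_fle X e a b : fsat D TT X e (fle a b) <-> teval e a <= teval e b.
Proof. simpl; lia. Qed.

Lemma fsat_flt X e a b : fsat D TT X e (flt a b) <-> teval e a < teval e b.
Proof. simpl; lia. Qed.

Lemma fsat_itv_after X e J a b :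
  fsat D TT X e (fpreceq_negm (itv_lo J) a b) /\ fsat D TT X e (fprec (itv_hi J) b a) <->
  teval e a <= teval e b /\ in_itv J (teval e b - teval e a).
Proof. unfold in_itv, fprec; destruct (itv_hi J); simpl; lia. Qed.

Lemma fsat_itv_before X e J a b :
  fsat D TT X e (fprec (itv_hi J) a b) /\ fsat D TT X e (fpreceq_negm (itv_lo J) b a) <->
  teval e b <= teval e a /\ in_itv J (teval e a - teval e b).
Proof. rewrite and_comm; apply fsat_itv_after. Qed.

Lemma fsat_none_between X e v a b :
  fsat D TT X e (fneg (FEx v (FAnd (flt a (TVar v)) (flt (TVar v) b)))) <->
  ~ exists d, D d /\ teval (upd e v d) a < d < teval (upd e v d) b.
Proof.
  unfold fneg; cbn [fsat]. setoid_rewrite fsat_flt. setoid_rewrite teval_upd_eq. tauto.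
Qed.

Lemma fsat_persist X e f :
  (forall p d, X p d -> TT p d) -> fsat D TT X e f -> fsat D TT TT e f.
Proof. intros hX; revert e; induction f; cbn [fsat]; firstorder. Qed.

Lemma fsat_guarded X e (P : Prop) f : (forall p d, X p d -> TT p d) ->
  (~ P \/ fsat D TT X e f) /\ (~ P \/ fsat D TT TT e f) <-> (P -> fsat D TT X e f).
Proof. intros; apply guarded_persistent, fsat_persist; auto. Qed.

End QHT.

Section StrictTrace.
Variables (A : Type) (lam : option nat) (tau : nat -> nat) (T : nat -> A -> Prop).
Hypothesis tau_step : forall i, inlen lam (S i) -> tau i < tau (S i).

Lemma inlen_le i j : inlen lam j -> i <= j -> inlen lam i.
Proof. destruct lam; simpl; lia. Qed.

Lemma tau_lt i j : inlen lam j -> i < j -> tau i < tau j.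
Proof.
  induction j as [|j IH]; intros hj hij; [lia|].
  assert (tau j < tau (S j)) by auto.
  destruct (Nat.eq_dec i j) as [->|]; [assumption|].
  assert (tau i < tau j) by (apply IH; [apply (inlen_le _ (S j))|]; auto; lia).
  lia.
Qed.

Lemma tau_lt_iff i j : inlen lam i -> inlen lam j -> tau i < tau j <-> i < j.
Proof.
  intros hi hj; split; [|now apply tau_lt].
  intros h; destruct (Nat.lt_ge_cases i j) as [|hji]; auto.
  destruct (Nat.eq_dec i j) as [->|]; [lia|].
  assert (tau j < tau i) by (apply tau_lt; auto; lia). lia.
Qed.

Lemma tau_le_iff i j : inlen lam i -> inlen lam j -> tau i <= tau j <-> i <= j.
Proof.
  intros hi hj. rewrite (Nat.le_ngt (tau i)), (Nat.le_ngt i), tau_lt_iff; tauto.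
Qed.

Lemma tau_next_iff k j : inlen lam k -> inlen lam j ->
  (tau k < tau j /\ ~ (exists i, inlen lam i /\ tau k < tau i < tau j)) <-> j = S k.
Proof.
  intros hk hj. rewrite (tau_lt_iff k j hk hj). split.
  - intros [hkj hnone]. destruct (Nat.eq_dec j (S k)) as [|hne]; [assumption|].
    exfalso; apply hnone. assert (hs : inlen lam (S k)) by (apply (inlen_le _ j); auto).
    exists (S k); split; [assumption|].
    rewrite (tau_lt_iff k (S k)), (tau_lt_iff (S k) j); auto; lia.
  - intros ->; split; [lia|]. intros [i [hi hbetween]].
    rewrite (tau_lt_iff k i), (tau_lt_iff i (S k)) in hbetween; auto; lia.
Qed.

Lemma tau_prev_iff k j : inlen lam k -> inlen lam j ->
  (tau j < tau k /\ ~ (exists i, inlen lam i /\ tau j < tau i < tau k)) <-> k = S j.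
Proof. intros; apply tau_next_iff; auto. Qed.

Lemma exists_corrD (P : nat -> Prop) :
  (exists d, corrD lam tau d /\ P d) <-> exists j, inlen lam j /\ P (tau j).
Proof. firstorder (subst; eauto). Qed.

Lemma forall_corrD (P : nat -> Prop) :
  (forall d, corrD lam tau d -> P d) <-> forall j, inlen lam j -> P (tau j).
Proof. firstorder (subst; eauto). Qed.

Lemma corrI_tau (X : nat -> A -> Prop) p k :
  inlen lam k -> corrI lam tau X p (tau k) <-> X k p.
Proof.
  intros hk; split; [|now exists k].
  intros [i [hi [hik hx]]].
  assert (i = k) as -> by (apply Nat.le_antisymm; apply tau_le_iff; auto; lia).
  assumption.
Qed.

Lemma corrI_incl X : (forall i p, inlen lam i -> X i p -> T i p) ->
  forall p d, corrI lam tau X p d -> corrI lam tau T p d.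
Proof. intros hX p d [i [hi [hd hx]]]; exists i; auto. Qed.

Notation fsat_at X := (fsat (corrD lam tau) (corrI lam tau T) (corrI lam tau X)).

Definition trans_correct (f : mform A) : Prop :=
  forall X x c e k, (forall i p, inlen lam i -> X i p -> T i p) ->
  inlen lam k -> teval e x = tau k -> term_below c x ->
  (sat lam tau T X k f <-> fsat_at X e (trans f x c)).

Lemma trans_correct_outer f X e c j : trans_correct f ->
  (forall i p, inlen lam i -> X i p -> T i p) -> inlen lam j ->
  (sat lam tau T X j f <-> fsat_at X (upd e c (tau j)) (trans f (TVar c) (S (S c)))).
Proof. intros hf hX hj; apply hf; auto; [apply teval_upd_eq|simpl; lia]. Qed.

Lemma trans_correct_inner f X e c j : trans_correct f ->
  (forall i p, inlen lam i -> X i p -> T i p) -> inlen lam j ->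
  (sat lam tau T X j f <->
   fsat_at X (upd e (S c) (tau j)) (trans f (TVar (S c)) (S (S c)))).
Proof. intros hf hX hj; apply hf; auto; [apply teval_upd_eq|simpl; lia]. Qed.

Ltac translate_to_positions hX hx hxc :=
  cbn [trans fsat sat];
  repeat first [ setoid_rewrite exists_corrD | setoid_rewrite forall_corrD
               | setoid_rewrite fsat_none_between
               | setoid_rewrite fsat_itv_after | setoid_rewrite fsat_itv_before
               | setoid_rewrite fsat_flt | setoid_rewrite fsat_fle
               | setoid_rewrite (teval_upd_inner _ _ _ _ _ hxc)
               | setoid_rewrite (teval_upd_outer _ _ _ _ hxc)
               | setoid_rewrite teval_upd_inner_var | setoid_rewrite teval_upd_eq
               | setoid_rewrite (fsat_guarded _ _ _ _ _ _ _ (corrI_incl _ hX)) ];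
  rewrite ?hx.

Lemma trans_correct_atom p : trans_correct (MAtom p).
Proof. intros X x c e k hX hk hx hxc; cbn; rewrite hx, corrI_tau; tauto. Qed.

Lemma trans_correct_imp f g :
  trans_correct f -> trans_correct g -> trans_correct (MImp f g).
Proof.
  intros hf hg X x c e k hX hk hx hxc; cbn [trans sat fsat].
  rewrite (hf X x c e k), (hg X x c e k), (hf T x c e k), (hg T x c e k); tauto.
Qed.

Lemma trans_correct_and f g :
  trans_correct f -> trans_correct g -> trans_correct (MAnd f g).
Proof.
  intros hf hg X x c e k hX hk hx hxc; cbn [trans sat fsat].
  rewrite (hf X x c e k), (hg X x c e k); tauto.
Qed.

Lemma trans_correct_or f g :
  trans_correct f -> trans_correct g -> trans_correct (MOr f g).
Proof.
  intros hf hg X x c e k hX hk hx hxc; cbn [trans sat fsat].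
  rewrite (hf X x c e k), (hg X x c e k); tauto.
Qed.

Lemma trans_correct_next J f : trans_correct f -> trans_correct (MNext J f).
Proof.
  intros hf X x c e k hX hk hx hxc. translate_to_positions hX hx hxc. split.
  - intros [hs [hfs hJ]]. exists (S k).
    destruct (proj2 (tau_next_iff k (S k) hk hs) eq_refl) as [hlt hnone].
    rewrite <- (trans_correct_outer f X e c (S k) hf hX hs).
    refine (conj hs (conj hlt (conj hnone (conj (conj (Nat.lt_le_incl _ _ hlt) hJ) hfs)))).
  - intros [j [hj [hlt [hnone [[_ hJ] hfj]]]]].
    pose proof (proj1 (tau_next_iff k j hk hj) (conj hlt hnone)); subst j.
    rewrite (trans_correct_outer f X e c (S k) hf hX hj); auto.
Qed.

Lemma trans_correct_wnext J f : trans_correct f -> trans_correct (MWNext J f).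
Proof.
  intros hf X x c e k hX hk hx hxc. translate_to_positions hX hx hxc. split.
  - intros h j hj [hlt [hnone [_ hJ]]].
    pose proof (proj1 (tau_next_iff k j hk hj) (conj hlt hnone)); subst j.
    rewrite <- (trans_correct_outer f X e c (S k) hf hX hj).
    destruct h as [[_ [hfs _]]|hn]; [assumption|tauto].
  - intros h. destruct (classic (inlen lam (S k) /\ in_itv J (tau (S k) - tau k)))
      as [[hs hJ]|hn]; [left|right; assumption].
    destruct (proj2 (tau_next_iff k (S k) hk hs) eq_refl) as [hlt hnone].
    rewrite (trans_correct_outer f X e c (S k) hf hX hs).
    refine (conj hs (conj (h (S k) hs _) hJ)).
    exact (conj hlt (conj hnone (conj (Nat.lt_le_incl _ _ hlt) hJ))).
Qed.

Lemma trans_correct_prev J f : trans_correct f -> trans_correct (MPrev J f).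
Proof.
  intros hf X x c e k hX hk hx hxc. translate_to_positions hX hx hxc. split.
  - intros [hk0 [hfk hJ]]. assert (hj : inlen lam (k - 1)) by (apply (inlen_le _ k); auto; lia).
    exists (k - 1).
    destruct (proj2 (tau_prev_iff k (k - 1) hk hj) ltac:(lia)) as [hlt hnone].
    rewrite <- (trans_correct_outer f X e c (k - 1) hf hX hj).
    refine (conj hj (conj hlt (conj hnone (conj (conj (Nat.lt_le_incl _ _ hlt) hJ) hfk)))).
  - intros [j [hj [hlt [hnone [[_ hJ] hfj]]]]].
    pose proof (proj1 (tau_prev_iff k j hk hj) (conj hlt hnone)); subst k.
    rewrite Nat.sub_1_r, (trans_correct_outer f X e c j hf hX hj); simpl; auto with arith.
Qed.

Lemma trans_correct_wprev J f : trans_correct f -> trans_correct (MWPrev J f).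
Proof.
  intros hf X x c e k hX hk hx hxc. translate_to_positions hX hx hxc. split.
  - intros h j hj [hlt [hnone [_ hJ]]].
    pose proof (proj1 (tau_prev_iff k j hk hj) (conj hlt hnone)); subst k.
    rewrite <- (trans_correct_outer f X e c j hf hX hj).
    rewrite Nat.sub_1_r in h; simpl in h.
    destruct h as [[_ [hfj _]]|hn]; [assumption|exfalso; apply hn; auto with arith].
  - intros h. destruct (classic (0 < k /\ in_itv J (tau k - tau (k - 1))))
      as [[hk0 hJ]|hn]; [left|right; assumption].
    assert (hj : inlen lam (k - 1)) by (apply (inlen_le _ k); auto; lia).
    destruct (proj2 (tau_prev_iff k (k - 1) hk hj) ltac:(lia)) as [hlt hnone].
    rewrite (trans_correct_outer f X e c (k - 1) hf hX hj).
    refine (conj hk0 (conj (h (k - 1) hj _) hJ)).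
    exact (conj hlt (conj hnone (conj (Nat.lt_le_incl _ _ hlt) hJ))).
Qed.

Lemma trans_correct_until J f g :
  trans_correct f -> trans_correct g -> trans_correct (MUntil J f g).
Proof.
  intros hf hg X x c e k hX hk hx hxc. translate_to_positions hX hx hxc. split.
  - intros [j [hkj [hj [hJ [hgj hfj]]]]]. exists j.
    rewrite (tau_le_iff k j hk hj), <- (trans_correct_outer g X e c j hg hX hj).
    refine (conj hj (conj hkj (conj (conj hkj hJ) (conj hgj _)))).
    intros i hi [hki hij].
    rewrite (tau_le_iff k i hk hi) in hki; rewrite (tau_lt_iff i j hi hj) in hij.
    apply (trans_correct_inner f X (upd e c (tau j)) c i hf hX hi); auto.
  - intros [j [hj [hkj [[_ hJ] [hgj hfj]]]]]. exists j.
    rewrite (tau_le_iff k j hk hj) in hkj; rewrite (trans_correct_outer g X e c j hg hX hj).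
    refine (conj hkj (conj hj (conj hJ (conj hgj _)))).
    intros i hki hij. assert (hi : inlen lam i) by (apply (inlen_le i j); auto; lia).
    apply (trans_correct_inner f X (upd e c (tau j)) c i hf hX hi), hfj; auto.
    rewrite (tau_le_iff k i hk hi), (tau_lt_iff i j hi hj); auto.
Qed.

Lemma trans_correct_since J f g :
  trans_correct f -> trans_correct g -> trans_correct (MSince J f g).
Proof.
  intros hf hg X x c e k hX hk hx hxc. translate_to_positions hX hx hxc. split.
  - intros [j [hjk [hJ [hgj hfj]]]]. assert (hj : inlen lam j) by (apply (inlen_le j k); auto).
    exists j.
    rewrite (tau_le_iff j k hj hk), <- (trans_correct_outer g X e c j hg hX hj).
    refine (conj hj (conj hjk (conj (conj hjk hJ) (conj hgj _)))).
    intros i hi [hji hik].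
    rewrite (tau_lt_iff j i hj hi) in hji; rewrite (tau_le_iff i k hi hk) in hik.
    apply (trans_correct_inner f X (upd e c (tau j)) c i hf hX hi); auto.
  - intros [j [hj [hjk [[_ hJ] [hgj hfj]]]]]. exists j.
    rewrite (tau_le_iff j k hj hk) in hjk; rewrite (trans_correct_outer g X e c j hg hX hj).
    refine (conj hjk (conj hJ (conj hgj _))).
    intros i hji hik. assert (hi : inlen lam i) by (apply (inlen_le i k); auto).
    apply (trans_correct_inner f X (upd e c (tau j)) c i hf hX hi), hfj; auto.
    rewrite (tau_lt_iff j i hj hi), (tau_le_iff i k hi hk); auto.
Qed.

Lemma trans_correct_release J f g :
  trans_correct f -> trans_correct g -> trans_correct (MRelease J f g).
Proof.
  intros hf hg X x c e k hX hk hx hxc. translate_to_positions hX hx hxc.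
  assert (hpers : forall e' h, fsat_at X e' h -> fsat_at T e' h)
    by (intros e' h; apply (fsat_persist _ _ _ (corrI lam tau X)), corrI_incl; assumption).
  split.
  - intros hr j hj. apply guarded_persistent.
    { intros [h|[i [hi [hb h]]]]; [left|right; exists i]; auto. }
    intros [hkj [_ hJ]]. rewrite (tau_le_iff k j hk hj) in hkj.
    destruct (hr j hkj hj hJ) as [hgj|[i [hki [hij hfi]]]].
    + left; apply (trans_correct_outer g X e c j hg hX hj); assumption.
    + right. assert (hi : inlen lam i) by (apply (inlen_le i j); auto; lia).
      exists i. rewrite (tau_le_iff k i hk hi), (tau_lt_iff i j hi hj).
      refine (conj hi (conj (conj hki hij) _)).
      apply (trans_correct_inner f X (upd e c (tau j)) c i hf hX hi); assumption.
  - intros hr j hkj hj hJ. rewrite (trans_correct_outer g X e c j hg hX hj).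
    destruct (hr j hj) as [[hn|[hgj|[i [hi [[hki hij] hfi]]]]] _].
    + exfalso; apply hn. rewrite (tau_le_iff k j hk hj); auto.
    + left; assumption.
    + right. rewrite (tau_le_iff k i hk hi) in hki; rewrite (tau_lt_iff i j hi hj) in hij.
      exists i. refine (conj hki (conj hij _)).
      apply (trans_correct_inner f X (upd e c (tau j)) c i hf hX hi); assumption.
Qed.

Lemma trans_correct_trigger J f g :
  trans_correct f -> trans_correct g -> trans_correct (MTrigger J f g).
Proof.
  intros hf hg X x c e k hX hk hx hxc. translate_to_positions hX hx hxc.
  assert (hpers : forall e' h, fsat_at X e' h -> fsat_at T e' h)
    by (intros e' h; apply (fsat_persist _ _ _ (corrI lam tau X)), corrI_incl; assumption).
  split.
  - intros hr j hj. apply guarded_persistent.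
    { intros [h|[i [hi [hb h]]]]; [left|right; exists i]; auto. }
    intros [hjk [_ hJ]]. rewrite (tau_le_iff j k hj hk) in hjk.
    destruct (hr j hjk hJ) as [hgj|[i [hji [hik hfi]]]].
    + left; apply (trans_correct_outer g X e c j hg hX hj); assumption.
    + right. assert (hi : inlen lam i) by (apply (inlen_le i k); auto).
      exists i. rewrite (tau_lt_iff j i hj hi), (tau_le_iff i k hi hk).
      refine (conj hi (conj (conj hji hik) _)).
      apply (trans_correct_inner f X (upd e c (tau j)) c i hf hX hi); assumption.
  - intros hr j hjk hJ. assert (hj : inlen lam j) by (apply (inlen_le j k); auto).
    rewrite (trans_correct_outer g X e c j hg hX hj).
    destruct (hr j hj) as [[hn|[hgj|[i [hi [[hji hik] hfi]]]]] _].
    + exfalso; apply hn. rewrite (tau_le_iff j k hj hk); auto.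
    + left; assumption.
    + right. rewrite (tau_lt_iff j i hj hi) in hji; rewrite (tau_le_iff i k hi hk) in hik.
      exists i. refine (conj hji (conj hik _)).
      apply (trans_correct_inner f X (upd e c (tau j)) c i hf hX hi); assumption.
Qed.

Lemma trans_correct_all f : trans_correct f.
Proof.
  induction f.
  - apply trans_correct_atom.
  - intros X x c e k _ _ _ _; cbn; tauto.
  - apply trans_correct_imp; assumption.
  - apply trans_correct_and; assumption.
  - apply trans_correct_or; assumption.
  - apply trans_correct_prev; assumption.
  - apply trans_correct_wprev; assumption.
  - apply trans_correct_since; assumption.
  - apply trans_correct_trigger; assumption.
  - apply trans_correct_next; assumption.
  - apply trans_correct_wnext; assumption.
  - apply trans_correct_until; assumption.
  - apply trans_correct_release; assumption.
Qed.

End StrictTrace.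

Theorem theorem5 (A : Type) (phi : mform A) (lam : option nat)
    (H T : nat -> A -> Prop) (tau : nat -> nat) (i : nat) :
  nonempty_intervals phi ->
  lam <> Some 0 ->
  strict_trace lam H T tau ->
  inlen lam i ->
  (sat lam tau T H i phi <->
     fsat (corrD lam tau) (corrI lam tau T) (corrI lam tau H) env0
          (trans phi (TCon (tau i)) 0)) /\
  (sat lam tau T T i phi <->
     fsat (corrD lam tau) (corrI lam tau T) (corrI lam tau T) env0
          (trans phi (TCon (tau i)) 0)).
Proof.
  (* An empty interval is translated into unsatisfiable constraints, exactly as it
     is unsatisfiable on the trace, and [lam <> Some 0] follows from [inlen lam i]. *)
  intros _ _ [[hHT _] hstep] hi.
  split; apply (trans_correct_all A lam tau T hstep phi); simpl; auto.
Qed.
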